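(* If $\Gamma;\Sigma;\theta\vdash_{pc}e:\tau$ is derivable in the type system of $\lambda$-WHR, $\theta'$ is a state environment with $\theta'\sqsupseteq\theta$, $m\in\mathbb{N}$, and $\delta$ is a substitution with $(\delta,\theta',m)\in\mathcal{V}[\![\Gamma]\!]$, then $(\delta(e),\theta',m)\in\mathcal{E}^{pc}[\![\tau]\!]$.
   Context: **Policies.** Fix a set of actors $a$ and a set of locks $\sigma$. A lock set $\Sigma$ is a set of locks. A clause is a pair $(\Sigma \Rightarrow a)$; a policy $p$ is a set of clauses. $p \sqsubseteq q$ iff for every $(\Sigma_2\Rightarrow a)\in q$ there is $(\Sigma_1\Rightarrow a)\in p$ with $\Sigma_1\subseteq\Sigma_2$. $\bot=\{(\emptyset\Rightarrow a)\mid a \text{ an actor}\}$. $p\sqcup q=\{(\Sigma_1\cup\Sigma_2\Rightarrow a)\mid (\Sigma_1\Rightarrow a)\in p,(\Sigma_2\Rightarrow a)\in q\}$. Specialization: $p|_\Sigma=\{(\Sigma_1\setminus\Sigma\Rightarrow a)\mid(\Sigma_1\Rightarrow a)\in p\}$. A fixed function $\mathrm{LockPolicy}$ assigns a policy to each lock. **Types.** Raw types $A ::= \mathsf{unit}\mid\mathsf{nat}\mid \tau_1+\tau_2\mid\tau_1\times\tau_2\mid \mathsf{ref}\,\tau\mid \tau_1\xrightarrow{\Sigma,p}\tau_2$; labeled types $\tau ::= A^p$. For $\tau=A^p$: $\tau\sqsubseteq q$ means $p\sqsubseteq q$; $q\sqsubseteq\tau$ means $q\sqsubseteq p$; $\tau|_\Sigma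 = A^{p|_\Sigma}$. **Syntax.** Expressions: $x\mid ()\mid n\ (n\in\mathbb{N})\mid \lambda x.e\mid (e,e')\mid \mathsf{fst}(e)\mid\mathsf{snd}(e)\mid\mathsf{inl}(e)\mid\mathsf{inr}(e)\mid \mathsf{case}\ e\ \mathsf{of}\ \mathsf{inl}\,x\Rightarrow e'\mid\mathsf{inr}\,y\Rightarrow e''\mid e\,e'\mid \mathsf{new}(e,\tau)\mid\ !e\mid e:=e'\mid \mathsf{open}\ \sigma\ \mathsf{in}\ e\mid\mathsf{opened}\ \sigma\ \mathsf{in}\ e\mid\mathsf{close}\ \sigma\ \mathsf{in}\ e\mid\mathsf{closed}\ \sigma\ \mathsf{in}\ e\mid \mathsf{when}\ \sigma\ \mathsf{then}\ e\ \mathsf{else}\ e'\mid l$ ($l$ ranging over a countably infinite set of locations). Values: $v::=\lambda x.e\mid(v,v')\mid\mathsf{inl}(v)\mid\mathsf{inr}(v)\mid()\mid l\mid n$; $\mathcal{V}$ is the set of values. $[v/x]e$ is substitution; for a map $\delta$ from variables to values, $\delta(e)$ substitutes simultaneously. A state $S$ is a finite map from locations to pairs $(v,\tau)$; write $S(l)=v$, $\mathrm{type}(S,l)=\tau$. A state environment $\theta$ is a finite map from locations to labeled types; $\theta'\sqsupseteq\theta$ iff $\theta\subseteq\theta'$ as graphs. **Observations.** $\omega::=\varepsilon\mid \mathsf{wr}_{l,\tau}(v)\mid\mathsf{open}(\sigma)\mid\mathsf{close}(\sigma)\mid\mathsf{unopen}(\sigma)\mid\mathsf{unclose}(\sigma)$.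 $\mathrm{pol}(\mathsf{wr}_{l,A^p}(v))=p$; the policy of each of the four lock observations on $\sigma$ is $\mathrm{LockPolicy}(\sigma)$; $\mathrm{pol}(\varepsilon)$ is undefined. **Reduction** $e,\Sigma,S\to e',S',\omega,\Sigma'$ ($\Sigma$ = open locks, $\Sigma'$ = active lock set). Congruence rules (the premise step's $S',\omega,\Sigma'$ are propagated unchanged): reduce $e$ inside $\mathsf{new}(e,\tau)$, $!e$, $e:=e'$, $l:=e$, $e\,e'$, $(\lambda x.e)\,e$, $(e,e')$, $(v,e)$, $\mathsf{fst}(e)$, $\mathsf{snd}(e)$, $\mathsf{inl}(e)$, $\mathsf{inr}(e)$, and the scrutinee of $\mathsf{case}$, all with the same open-lock set $\Sigma$. Lock rules: $\mathsf{open}\ \sigma\ \mathsf{in}\ e,\Sigma,S\to \mathsf{opened}\ \sigma\ \mathsf{in}\ e,S,\mathsf{open}(\sigma),\Sigma$; if $e,\Sigma\cup\{\sigma\},S\to e',S',\omega,\Sigma'$ then $\mathsf{opened}\ \sigma\ \mathsf{in}\ e,\Sigma,S\to\mathsf{opened}\ \sigma\ \mathsf{in}\ e',S',\omega,\Sigma'$; $\mathsf{opened}\ \sigma\ \mathsf{in}\ v,\Sigma,S\to v,S,\mathsf{unopen}(\sigma),\Sigma$; analogously for $\mathsf{close}/\mathsf{closed}$ with $\Sigma\setminus\{\sigma\}$ and observations $\mathsf{close}(\sigma)$, $\mathsf{unclose}(\sigma)$. If $\sigma\in\Sigma$ and $e,\Sigma,S\to e'',S',\omega,\Sigma'$ then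 $\mathsf{when}\ \sigma\ \mathsf{then}\ e\ \mathsf{else}\ e',\Sigma,S\to\mathsf{when}\ \sigma\ \mathsf{then}\ e''\ \mathsf{else}\ e',S',\omega,\Sigma'$; if $\sigma\notin\Sigma$ and $e',\Sigma,S\to e'',S',\omega,\Sigma'$ then it steps to $\mathsf{when}\ \sigma\ \mathsf{then}\ e\ \mathsf{else}\ e''$; if $\sigma\in\Sigma$, $\mathsf{when}\ \sigma\ \mathsf{then}\ v\ \mathsf{else}\ e'\to v$; if $\sigma\notin\Sigma$, $\mathsf{when}\ \sigma\ \mathsf{then}\ e\ \mathsf{else}\ v\to v$ (both with $S$ unchanged, $\varepsilon$, active set $\Sigma$). Base rules (state unchanged unless stated, active set $\Sigma$): $!l\to v$ with $\varepsilon$ if $S(l)=v$; $\mathsf{new}(v,\tau),\Sigma,S\to l,S\cup\{l\mapsto(v,\tau)\},\mathsf{wr}_{l,\tau}(v),\Sigma$ for any $l\notin\mathrm{dom}(S)$; $l:=v,\Sigma,S\to (),S[l\mapsto(v,\tau)],\mathsf{wr}_{l,\tau}(v),\Sigma$ if $l\in\mathrm{dom}(S)$, $\mathrm{type}(S,l)=\tau$; $(\lambda x.e)\,v\to[v/x]e$, $\mathsf{fst}(v,v')\to v$, $\mathsf{snd}(v,v')\to v'$, $\mathsf{case}\ \mathsf{inl}(v)\ldots\to[v/x]e'$, $\mathsf{case}\ \mathsf{inr}(v)\ldots\to[v/y]e''$, all with $\varepsilon$. **Subtyping** $<:$: $A^p<:B^{p'}$ if $p\sqsubseteq p'$ and $A<:B$;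 $\mathsf{unit}<:\mathsf{unit}$; $\mathsf{nat}<:\mathsf{nat}$; $\mathsf{ref}\,\tau<:\mathsf{ref}\,\tau$; $\tau_0\times\tau_2<:\tau_1\times\tau_3$ and $\tau_0+\tau_2<:\tau_1+\tau_3$ if $\tau_0<:\tau_1,\tau_2<:\tau_3$; $\tau_1\xrightarrow{\Sigma,p}\tau_2<:\tau_0\xrightarrow{\Sigma',p'}\tau_3$ if $\tau_0<:\tau_1$, $\tau_2<:\tau_3$, $p'\sqsubseteq p$, $\Sigma\subseteq\Sigma'$. **Typing** $\Gamma;\Sigma;\theta\vdash_{pc}e:\tau$: var: $x:\tau$ if $x:\tau\in\Gamma$; $():\mathsf{unit}^\bot$; $n:\mathsf{nat}^\bot$; $l:(\mathsf{ref}\,\theta(l))^\bot$; $\lambda$: from $\Gamma,x:\tau_1;\Sigma';\theta\vdash_{pc'}e:\tau_2$ infer $\Gamma;\Sigma;\theta\vdash_{pc}\lambda x.e:(\tau_1\xrightarrow{\Sigma',pc'}\tau_2)^\bot$; open/opened: from $\Gamma;\Sigma\cup\{\sigma\};\theta\vdash_{pc}e:\tau$ and $pc\sqsubseteq\mathrm{LockPolicy}(\sigma)$ infer $\mathsf{open}\ \sigma\ \mathsf{in}\ e:\tau$ and $\mathsf{opened}\ \sigma\ \mathsf{in}\ e:\tau$ under $\Gamma;\Sigma;\theta\vdash_{pc}$; close/closed likewise with $\Sigma\setminus\{\sigma\}$; pair: $e_i:\tau_i$ gives $(e_1,e_2):(\tau_1\times\tau_2)^\bot$; fst/snd: $e:(\tau_1\times\tau_2)^p$,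 $p\sqsubseteq\tau_i$ gives $\mathsf{fst}(e):\tau_1$, resp. $\mathsf{snd}(e):\tau_2$; $e:\tau_1$ gives $\mathsf{inl}(e):(\tau_1+\tau_2)^\bot$, $e:\tau_2$ gives $\mathsf{inr}(e):(\tau_1+\tau_2)^\bot$; case: $e:(\tau_1+\tau_2)^p$, $p\sqsubseteq\tau$, $\Gamma,x:\tau_1;\Sigma;\theta\vdash_{pc\sqcup p}e_1:\tau$, $\Gamma,y:\tau_2;\Sigma;\theta\vdash_{pc\sqcup p}e_2:\tau$ give $\mathsf{case}\ e\ \mathsf{of}\ \mathsf{inl}\,x\Rightarrow e_1\mid\mathsf{inr}\,y\Rightarrow e_2:\tau$; sub: from $\Gamma;\Sigma;\theta\vdash_{pc'}e:\tau'$, $pc\sqsubseteq pc'$, $\tau'<:\tau$ infer $\Gamma;\Sigma;\theta\vdash_{pc}e:\tau$; app: $e_1:(\tau_1\xrightarrow{\Sigma',pc'}\tau_2)^p$, $e_2:\tau_1'$, $p\sqsubseteq\tau_2$, $pc\sqcup p\sqsubseteq pc'$, $\tau_1'<:\tau_1$, $\Sigma'\subseteq\Sigma$ give $e_1\,e_2:\tau_2$; deref: $e:(\mathsf{ref}\,\tau)^p$, $p\sqsubseteq\tau'$, $\tau<:\tau'$ give $!e:\tau'$; new: $e:\tau'$, $pc\sqsubseteq\tau$, $\tau'|_\Sigma<:\tau$ give $\mathsf{new}(e,\tau):(\mathsf{ref}\,\tau)^\bot$; assign: $e:(\mathsf{ref}\,\tau')^p$, $e':\tau$, $\tau|_\Sigma<:\tau'$,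 $pc\sqcup p\sqsubseteq\tau'$ give $e:=e':\mathsf{unit}^\bot$; when: $\Gamma;\Sigma\cup\{\sigma\};\theta\vdash_{pc\sqcup\mathrm{LockPolicy}(\sigma)}e_1:\tau$, $\Gamma;\Sigma;\theta\vdash_{pc\sqcup\mathrm{LockPolicy}(\sigma)}e_2:\tau$, $\mathrm{LockPolicy}(\sigma)\sqsubseteq\tau$ give $\mathsf{when}\ \sigma\ \mathsf{then}\ e_1\ \mathsf{else}\ e_2:\tau$. (All premises without explicit context use $\Gamma;\Sigma;\theta\vdash_{pc}$.) **Unary relation** (sets of triples, defined by well-founded recursion on the step index $m$). $(S,m)\triangleright\theta$ iff $\mathrm{dom}\,\theta\subseteq\mathrm{dom}\,S$ and for all $l\in\mathrm{dom}\,\theta$: $\theta(l)=\mathrm{type}(S,l)$ and $(S(l),\theta,m)\in\mathcal{V}[\![\theta(l)]\!]$. $\mathcal{V}[\![A^p]\!]=\mathcal{V}[\![A]\!]$; $\mathcal{V}[\![\mathsf{unit}]\!]=\{((),\theta,m)\}$; $\mathcal{V}[\![\mathsf{nat}]\!]=\{(n,\theta,m)\mid n\in\mathbb{N}\}$; $\mathcal{V}[\![\tau_1\times\tau_2]\!]=\{((v_1,v_2),\theta,m)\mid (v_i,\theta,m)\in\mathcal{V}[\![\tau_i]\!]\}$; $\mathcal{V}[\![\tau_1+\tau_2]\!]=\{(\mathsf{inl}(v),\theta,m)\mid(v,\theta,m)\in\mathcal{V}[\![\tau_1]\!]\}\cup\{(\mathsf{inr}(v),\theta,m)\mid(v,\theta,m)\in\mathcal{V}[\![\tau_2]\!]\}$;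 $\mathcal{V}[\![\mathsf{ref}\,\tau]\!]=\{(l,\theta,m)\mid\theta(l)=\tau\}$; $(\lambda x.e,\theta,m)\in\mathcal{V}[\![\tau_1\xrightarrow{\Sigma,pc}\tau_2]\!]$ iff for all $\theta'\sqsupseteq\theta$, $m'<m$, $v$ with $(v,\theta',m')\in\mathcal{V}[\![\tau_1]\!]$: $([v/x]e,\theta',m')\in\mathcal{E}^{pc}[\![\tau_2]\!]$. $\mathcal{E}^{pc}[\![\tau]\!]=\mathcal{V}[\![\tau]\!]\cup\{(e,\theta,m)\mid e\notin\mathcal{V}$ and for all $S,\theta'\sqsupseteq\theta,m'<m,e',S',\omega,\Sigma,\Sigma'$ with $(S,m')\triangleright\theta'$ and $e,\Sigma,S\to e',S',\omega,\Sigma'$: ($\omega=\varepsilon$ or $pc\sqsubseteq\mathrm{pol}(\omega)$) and there is $\theta''\sqsupseteq\theta'$ with $(S',m')\triangleright\theta''$ and $(e',\theta'',m')\in\mathcal{E}^{pc}[\![\tau]\!]\}$. Finally $(\delta,\theta,m)\in\mathcal{V}[\![\Gamma]\!]$ iff $\mathrm{dom}\,\Gamma\subseteq\mathrm{dom}\,\delta$ and $(\delta(x),\theta,m)\in\mathcal{V}[\![\Gamma(x)]\!]$ for all $x\in\mathrm{dom}\,\Gamma$. *)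

From Stdlib Require Import List Arith Wf_nat PeanoNat.
Import ListNotations.

Set Implicit Arguments.

Section WHR.

Context {Actor Lock : Type}.

(* A lock set is a set of locks; a policy is a set of clauses (Sigma => a). *)
Definition lockset := Lock -> Prop.
Definition policy := lockset -> Actor -> Prop.

Definition ls_sub (S1 S2 : lockset) : Prop := forall s, S1 s -> S2 s.
Definition ls_eq (S1 S2 : lockset) : Prop := forall s, S1 s <-> S2 s.
Definition ls_empty : lockset := fun _ => False.
Definition ls_union (S1 S2 : lockset) : lockset := fun s => S1 s \/ S2 s.
Definition ls_diff (S1 S2 : lockset) : lockset := fun s => S1 s /\ ~ S2 s.
Definition ls_add (S : lockset) (l : Lock) : lockset := fun s => S s \/ s = l.
Definition ls_rem (S : lockset) (l : Lock) : lockset := fun s => S s /\ s <> l.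

Definition pol_le (p q : policy) : Prop :=
  forall S2 a, q S2 a -> exists S1, p S1 a /\ ls_sub S1 S2.

Definition pol_bot : policy := fun S _ => ls_eq S ls_empty.

Definition pol_join (p q : policy) : policy :=
  fun S a => exists S1 S2, p S1 a /\ q S2 a /\ ls_eq S (ls_union S1 S2).

Definition pol_spec (p : policy) (Sg : lockset) : policy :=
  fun S a => exists S1, p S1 a /\ ls_eq S (ls_diff S1 Sg).

Inductive rty : Type :=
| TUnit : rty
| TNat : rty
| TSum : lty -> lty -> rty
| TProd : lty -> lty -> rty
| TRef : lty -> rty
| TArr : lty -> lockset -> policy -> lty -> rty
with lty : Type :=
| Lab : rty -> policy -> lty.

Definition lab (t : lty) : policy := match t with Lab _ p => p end.
Definition ty_le_pol (t : lty) (q : policy) : Prop := pol_le (lab t) q.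
Definition pol_le_ty (q : policy) (t : lty) : Prop := pol_le q (lab t).
Definition ty_spec (t : lty) (Sg : lockset) : lty :=
  match t with Lab A p => Lab A (pol_spec p Sg) end.

Inductive expr : Type :=
| EVar : nat -> expr
| EUnit : expr
| ENat : nat -> expr
| ELam : expr -> expr
| EPair : expr -> expr -> expr
| EFst : expr -> expr
| ESnd : expr -> expr
| EInl : expr -> expr
| EInr : expr -> expr
| ECase : expr -> expr -> expr -> expr
| EApp : expr -> expr -> expr
| ENew : expr -> lty -> expr
| EDeref : expr -> expr
| EAssign : expr -> expr -> expr
| EOpen : Lock -> expr -> expr
| EOpened : Lock -> expr -> expr
| EClose : Lock -> expr -> expr
| EClosed : Lock -> expr -> expr
| EWhen : Lock -> expr -> expr -> expr
| ELoc : nat -> expr.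

Inductive is_value : expr -> Prop :=
| VLam : forall e, is_value (ELam e)
| VPair : forall v v', is_value v -> is_value v' -> is_value (EPair v v')
| VInl : forall v, is_value v -> is_value (EInl v)
| VInr : forall v, is_value v -> is_value (EInr v)
| VUnit : is_value EUnit
| VLoc : forall l, is_value (ELoc l)
| VNat : forall n, is_value (ENat n).

Definition upren (xi : nat -> nat) (n : nat) : nat :=
  match n with 0 => 0 | S k => S (xi k) end.

Fixpoint ren (xi : nat -> nat) (e : expr) : expr :=
  match e with
  | EVar n => EVar (xi n)
  | EUnit => EUnit
  | ENat n => ENat n
  | ELam b => ELam (ren (upren xi) b)
  | EPair a b => EPair (ren xi a) (ren xi b)
  | EFst a => EFst (ren xi a)
  | ESnd a => ESnd (ren xi a)
  | EInl a => EInl (ren xi a)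
  | EInr a => EInr (ren xi a)
  | ECase a b c => ECase (ren xi a) (ren (upren xi) b) (ren (upren xi) c)
  | EApp a b => EApp (ren xi a) (ren xi b)
  | ENew a t => ENew (ren xi a) t
  | EDeref a => EDeref (ren xi a)
  | EAssign a b => EAssign (ren xi a) (ren xi b)
  | EOpen s a => EOpen s (ren xi a)
  | EOpened s a => EOpened s (ren xi a)
  | EClose s a => EClose s (ren xi a)
  | EClosed s a => EClosed s (ren xi a)
  | EWhen s a b => EWhen s (ren xi a) (ren xi b)
  | ELoc l => ELoc l
  end.

Definition up (sg : nat -> expr) (n : nat) : expr :=
  match n with 0 => EVar 0 | S k => ren S (sg k) end.

Fixpoint subst (sg : nat -> expr) (e : expr) : expr :=
  match e with
  | EVar n => sg n
  | EUnit => EUnit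
  | ENat n => ENat n
  | ELam b => ELam (subst (up sg) b)
  | EPair a b => EPair (subst sg a) (subst sg b)
  | EFst a => EFst (subst sg a)
  | ESnd a => ESnd (subst sg a)
  | EInl a => EInl (subst sg a)
  | EInr a => EInr (subst sg a)
  | ECase a b c => ECase (subst sg a) (subst (up sg) b) (subst (up sg) c)
  | EApp a b => EApp (subst sg a) (subst sg b)
  | ENew a t => ENew (subst sg a) t
  | EDeref a => EDeref (subst sg a)
  | EAssign a b => EAssign (subst sg a) (subst sg b)
  | EOpen s a => EOpen s (subst sg a)
  | EOpened s a => EOpened s (subst sg a)
  | EClose s a => EClose s (subst sg a)
  | EClosed s a => EClosed s (subst sg a)
  | EWhen s a b => EWhen s (subst sg a) (subst sg b)
  | ELoc l => ELoc l
  end.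

Definition subst1 (v : expr) (e : expr) : expr :=
  subst (fun n => match n with 0 => v | S k => EVar k end) e.

Definition vsubst := nat -> option expr.
Definition vsubst_ok (d : vsubst) : Prop :=
  forall x v, d x = Some v -> is_value v.
Definition apply_vsubst (d : vsubst) (e : expr) : expr :=
  subst (fun x => match d x with Some v => v | None => EVar x end) e.

Definition finite_dom {A : Type} (f : nat -> option A) : Prop :=
  exists s : list nat, forall l, f l <> None -> In l s.

Definition state := nat -> option (expr * lty).
Definition senv := nat -> option lty.

Definition senv_ext (th th' : senv) : Prop :=
  forall l t, th l = Some t -> th' l = Some t.

Definition upd (S : state) (l : nat) (vt : expr * lty) : state :=
  fun l' => if Nat.eqb l' l then Some vt else S l'.

Inductive obs : Type :=
| OEps : obs
| OWr : nat -> lty -> expr -> obs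
| OOpen : Lock -> obs
| OClose : Lock -> obs
| OUnopen : Lock -> obs
| OUnclose : Lock -> obs.

Variable LockPolicy : Lock -> policy.

Definition pol_obs (w : obs) : option policy :=
  match w with
  | OEps => None
  | OWr _ t _ => Some (lab t)
  | OOpen s | OClose s | OUnopen s | OUnclose s => Some (LockPolicy s)
  end.

Definition obs_ok (pc : policy) (w : obs) : Prop :=
  match pol_obs w with None => True | Some p => pol_le pc p end.

Inductive step : expr -> lockset -> state -> expr -> state -> obs -> lockset -> Prop :=
| st_new : forall e t Sg S e' S' w Sg',
    step e Sg S e' S' w Sg' -> step (ENew e t) Sg S (ENew e' t) S' w Sg'
| st_deref : forall e Sg S e' S' w Sg',
    step e Sg S e' S' w Sg' -> step (EDeref e) Sg S (EDeref e') S' w Sg'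
| st_assignL : forall e e2 Sg S e' S' w Sg',
    step e Sg S e' S' w Sg' -> step (EAssign e e2) Sg S (EAssign e' e2) S' w Sg'
| st_assignR : forall l e Sg S e' S' w Sg',
    step e Sg S e' S' w Sg' -> step (EAssign (ELoc l) e) Sg S (EAssign (ELoc l) e') S' w Sg'
| st_appL : forall e e2 Sg S e' S' w Sg',
    step e Sg S e' S' w Sg' -> step (EApp e e2) Sg S (EApp e' e2) S' w Sg'
| st_appR : forall b e Sg S e' S' w Sg',
    step e Sg S e' S' w Sg' -> step (EApp (ELam b) e) Sg S (EApp (ELam b) e') S' w Sg'
| st_pairL : forall e e2 Sg S e' S' w Sg',
    step e Sg S e' S' w Sg' -> step (EPair e e2) Sg S (EPair e' e2) S' w Sg'
| st_pairR : forall v e Sg S e' S' w Sg',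
    is_value v ->
    step e Sg S e' S' w Sg' -> step (EPair v e) Sg S (EPair v e') S' w Sg'
| st_fst : forall e Sg S e' S' w Sg',
    step e Sg S e' S' w Sg' -> step (EFst e) Sg S (EFst e') S' w Sg'
| st_snd : forall e Sg S e' S' w Sg',
    step e Sg S e' S' w Sg' -> step (ESnd e) Sg S (ESnd e') S' w Sg'
| st_inl : forall e Sg S e' S' w Sg',
    step e Sg S e' S' w Sg' -> step (EInl e) Sg S (EInl e') S' w Sg'
| st_inr : forall e Sg S e' S' w Sg',
    step e Sg S e' S' w Sg' -> step (EInr e) Sg S (EInr e') S' w Sg'
| st_case : forall e e1 e2 Sg S e' S' w Sg',
    step e Sg S e' S' w Sg' -> step (ECase e e1 e2) Sg S (ECase e' e1 e2) S' w Sg'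
| st_open : forall s e Sg S,
    step (EOpen s e) Sg S (EOpened s e) S (OOpen s) Sg
| st_opened : forall s e Sg S e' S' w Sg',
    step e (ls_add Sg s) S e' S' w Sg' ->
    step (EOpened s e) Sg S (EOpened s e') S' w Sg'
| st_opened_val : forall s v Sg S,
    is_value v -> step (EOpened s v) Sg S v S (OUnopen s) Sg
| st_close : forall s e Sg S,
    step (EClose s e) Sg S (EClosed s e) S (OClose s) Sg
| st_closed : forall s e Sg S e' S' w Sg',
    step e (ls_rem Sg s) S e' S' w Sg' ->
    step (EClosed s e) Sg S (EClosed s e') S' w Sg'
| st_closed_val : forall s v Sg S,
    is_value v -> step (EClosed s v) Sg S v S (OUnclose s) Sg
| st_when_then : forall s e1 e2 Sg S e'' S' w Sg',
    Sg s -> step e1 Sg S e'' S' w Sg' ->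
    step (EWhen s e1 e2) Sg S (EWhen s e'' e2) S' w Sg'
| st_when_else : forall s e1 e2 Sg S e'' S' w Sg',
    ~ Sg s -> step e2 Sg S e'' S' w Sg' ->
    step (EWhen s e1 e2) Sg S (EWhen s e1 e'') S' w Sg'
| st_when_then_val : forall s v e2 Sg S,
    Sg s -> is_value v -> step (EWhen s v e2) Sg S v S OEps Sg
| st_when_else_val : forall s e1 v Sg S,
    ~ Sg s -> is_value v -> step (EWhen s e1 v) Sg S v S OEps Sg
| st_deref_loc : forall l v t Sg S,
    S l = Some (v, t) -> step (EDeref (ELoc l)) Sg S v S OEps Sg
| st_new_val : forall v t l Sg S,
    is_value v -> S l = None ->
    step (ENew v t) Sg S (ELoc l) (upd S l (v, t)) (OWr l t v) Sg
| st_assign_val : forall l v v0 t Sg S,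
    is_value v -> S l = Some (v0, t) ->
    step (EAssign (ELoc l) v) Sg S EUnit (upd S l (v, t)) (OWr l t v) Sg
| st_beta : forall b v Sg S,
    is_value v -> step (EApp (ELam b) v) Sg S (subst1 v b) S OEps Sg
| st_fst_val : forall v v' Sg S,
    is_value v -> is_value v' -> step (EFst (EPair v v')) Sg S v S OEps Sg
| st_snd_val : forall v v' Sg S,
    is_value v -> is_value v' -> step (ESnd (EPair v v')) Sg S v' S OEps Sg
| st_case_inl : forall v e1 e2 Sg S,
    is_value v -> step (ECase (EInl v) e1 e2) Sg S (subst1 v e1) S OEps Sg
| st_case_inr : forall v e1 e2 Sg S,
    is_value v -> step (ECase (EInr v) e1 e2) Sg S (subst1 v e2) S OEps Sg.

Inductive subR : rty -> rty -> Prop :=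
| sub_unit : subR TUnit TUnit
| sub_nat : subR TNat TNat
| sub_ref : forall t, subR (TRef t) (TRef t)
| sub_prod : forall t0 t1 t2 t3,
    subL t0 t1 -> subL t2 t3 -> subR (TProd t0 t2) (TProd t1 t3)
| sub_sum : forall t0 t1 t2 t3,
    subL t0 t1 -> subL t2 t3 -> subR (TSum t0 t2) (TSum t1 t3)
| sub_arr : forall t0 t1 t2 t3 Sg Sg' p p',
    subL t0 t1 -> subL t2 t3 -> pol_le p' p -> ls_sub Sg Sg' ->
    subR (TArr t1 Sg p t2) (TArr t0 Sg' p' t3)
with subL : lty -> lty -> Prop :=
| sub_lab : forall A B p p', pol_le p p' -> subR A B -> subL (Lab A p) (Lab B p').

Definition ctx := nat -> option lty.
Definition ctx_cons (t : lty) (G : ctx) : ctx :=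
  fun n => match n with 0 => Some t | S k => G k end.

Inductive typing : ctx -> lockset -> senv -> policy -> expr -> lty -> Prop :=
| ty_var : forall G Sg th pc x t, G x = Some t -> typing G Sg th pc (EVar x) t
| ty_unit : forall G Sg th pc, typing G Sg th pc EUnit (Lab TUnit pol_bot)
| ty_nat : forall G Sg th pc n, typing G Sg th pc (ENat n) (Lab TNat pol_bot)
| ty_loc : forall G Sg th pc l t,
    th l = Some t -> typing G Sg th pc (ELoc l) (Lab (TRef t) pol_bot)
| ty_lam : forall G Sg Sg' th pc pc' e t1 t2,
    typing (ctx_cons t1 G) Sg' th pc' e t2 ->
    typing G Sg th pc (ELam e) (Lab (TArr t1 Sg' pc' t2) pol_bot)
| ty_open : forall G Sg th pc s e t,
    typing G (ls_add Sg s) th pc e t -> pol_le pc (LockPolicy s) ->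
    typing G Sg th pc (EOpen s e) t
| ty_opened : forall G Sg th pc s e t,
    typing G (ls_add Sg s) th pc e t -> pol_le pc (LockPolicy s) ->
    typing G Sg th pc (EOpened s e) t
| ty_close : forall G Sg th pc s e t,
    typing G (ls_rem Sg s) th pc e t -> pol_le pc (LockPolicy s) ->
    typing G Sg th pc (EClose s e) t
| ty_closed : forall G Sg th pc s e t,
    typing G (ls_rem Sg s) th pc e t -> pol_le pc (LockPolicy s) ->
    typing G Sg th pc (EClosed s e) t
| ty_pair : forall G Sg th pc e1 e2 t1 t2,
    typing G Sg th pc e1 t1 -> typing G Sg th pc e2 t2 ->
    typing G Sg th pc (EPair e1 e2) (Lab (TProd t1 t2) pol_bot)
| ty_fst : forall G Sg th pc e t1 t2 p,
    typing G Sg th pc e (Lab (TProd t1 t2) p) -> pol_le_ty p t1 ->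
    typing G Sg th pc (EFst e) t1
| ty_snd : forall G Sg th pc e t1 t2 p,
    typing G Sg th pc e (Lab (TProd t1 t2) p) -> pol_le_ty p t2 ->
    typing G Sg th pc (ESnd e) t2
| ty_inl : forall G Sg th pc e t1 t2,
    typing G Sg th pc e t1 -> typing G Sg th pc (EInl e) (Lab (TSum t1 t2) pol_bot)
| ty_inr : forall G Sg th pc e t1 t2,
    typing G Sg th pc e t2 -> typing G Sg th pc (EInr e) (Lab (TSum t1 t2) pol_bot)
| ty_case : forall G Sg th pc e e1 e2 t1 t2 p t,
    typing G Sg th pc e (Lab (TSum t1 t2) p) -> pol_le_ty p t ->
    typing (ctx_cons t1 G) Sg th (pol_join pc p) e1 t ->
    typing (ctx_cons t2 G) Sg th (pol_join pc p) e2 t ->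
    typing G Sg th pc (ECase e e1 e2) t
| ty_sub : forall G Sg th pc pc' e t t',
    typing G Sg th pc' e t' -> pol_le pc pc' -> subL t' t ->
    typing G Sg th pc e t
| ty_app : forall G Sg Sg' th pc pc' e1 e2 t1 t1' t2 p,
    typing G Sg th pc e1 (Lab (TArr t1 Sg' pc' t2) p) ->
    typing G Sg th pc e2 t1' ->
    pol_le_ty p t2 -> pol_le (pol_join pc p) pc' -> subL t1' t1 -> ls_sub Sg' Sg ->
    typing G Sg th pc (EApp e1 e2) t2
| ty_deref : forall G Sg th pc e t t' p,
    typing G Sg th pc e (Lab (TRef t) p) -> pol_le_ty p t' -> subL t t' ->
    typing G Sg th pc (EDeref e) t'
| ty_newr : forall G Sg th pc e t t',
    typing G Sg th pc e t' -> pol_le_ty pc t -> subL (ty_spec t' Sg) t ->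
    typing G Sg th pc (ENew e t) (Lab (TRef t) pol_bot)
| ty_assign : forall G Sg th pc e e' t t' p,
    typing G Sg th pc e (Lab (TRef t') p) -> typing G Sg th pc e' t ->
    subL (ty_spec t Sg) t' -> pol_le_ty (pol_join pc p) t' ->
    typing G Sg th pc (EAssign e e') (Lab TUnit pol_bot)
| ty_when : forall G Sg th pc s e1 e2 t,
    typing G (ls_add Sg s) th (pol_join pc (LockPolicy s)) e1 t ->
    typing G Sg th (pol_join pc (LockPolicy s)) e2 t ->
    pol_le_ty (LockPolicy s) t ->
    typing G Sg th pc (EWhen s e1 e2) t.

Definition Vrel_t := lty -> expr -> senv -> Prop.
Definition Erel_t := policy -> lty -> expr -> senv -> Prop.
Definition Rels := (Vrel_t * Erel_t)%type.

Definition state_sat (Vm : Vrel_t) (S : state) (th : senv) : Prop :=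
  forall l t, th l = Some t ->
    exists v, S l = Some (v, t) /\ Vm t v th.

Section AtIndex.
Variable m : nat.
Variable prev : forall m', m' < m -> Rels.

Fixpoint VR (A : rty) (e : expr) (th : senv) {struct A} : Prop :=
  match A with
  | TUnit => e = EUnit
  | TNat => exists n, e = ENat n
  | TProd t1 t2 => exists v1 v2, e = EPair v1 v2 /\ VL t1 v1 th /\ VL t2 v2 th
  | TSum t1 t2 =>
      (exists v, e = EInl v /\ VL t1 v th) \/ (exists v, e = EInr v /\ VL t2 v th)
  | TRef t => exists l, e = ELoc l /\ th l = Some t
  | TArr t1 _ pc t2 =>
      exists b, e = ELam b /\
        forall th' m' (H : m' < m) v,
          finite_dom th' -> senv_ext th th' ->
          fst (prev H) t1 v th' ->
          snd (prev H) pc t2 (subst1 v b) th'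
  end
with VL (t : lty) (e : expr) (th : senv) {struct t} : Prop :=
  match t with Lab A _ => VR A e th end.

Definition ER (pc : policy) (t : lty) (e : expr) (th : senv) : Prop :=
  VL t e th \/
  (~ is_value e /\
   forall S th' m' (H : m' < m) e' S' w Sg Sg',
     finite_dom S -> finite_dom th' -> senv_ext th th' ->
     state_sat (fst (prev H)) S th' ->
     step e Sg S e' S' w Sg' ->
     obs_ok pc w /\
     exists th'', finite_dom th'' /\ senv_ext th' th'' /\
       state_sat (fst (prev H)) S' th'' /\
       snd (prev H) pc t e' th'').

Definition build : Rels := (VL, ER).
End AtIndex.

Definition rels (m : nat) : Rels := Fix lt_wf (fun _ => Rels) build m.

Definition Vrel (t : lty) (e : expr) (th : senv) (m : nat) : Prop := fst (rels m) t e th.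
Definition Erel (pc : policy) (t : lty) (e : expr) (th : senv) (m : nat) : Prop :=
  snd (rels m) pc t e th.

Definition Vctx (G : ctx) (d : vsubst) (th : senv) (m : nat) : Prop :=
  forall x t, G x = Some t -> exists v, d x = Some v /\ Vrel t v th m.

End WHR.

(** The fundamental lemma of the logical relation, proved in the standard way:
    semantic typing ("every related substitution instance lies in E") is closed
    under each typing rule.  Reduction inside an evaluation context is handled
    once and for all by a bind lemma, which is proved by induction on the step
    index.  The relation quantifies over every open-lock set and V ignores
    security labels, so neither the lock set of the typing judgment nor the label
    side conditions [p ⊑ τ] play a role; the lock and write side conditions of
    the typing rules are exactly what is needed to show [pc ⊑ pol(ω)] for the
    observations [open], [close], [unopen], [unclose] and [wr]. *)

From Stdlib Require Import List Wf_nat PeanoNat Lia FunctionalExtensionality.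
Import ListNotations.

Section Preliminaries.
Context {Actor Lock : Type}.
Local Notation expr := (@expr Actor Lock).
Local Notation lty := (@lty Actor Lock).
Local Notation policy := (@policy Actor Lock).
Local Notation senv := (@senv Actor Lock).

Lemma ren_ext (f g : nat -> nat) (e : expr) :
  (forall x, f x = g x) -> ren f e = ren g e.
Proof.
  revert f g; induction e; intros f g H; simpl; f_equal; auto;
    try (apply IHe || apply IHe2 || apply IHe3); intros [|x]; simpl; auto.
Qed.

Lemma subst_ext (f g : nat -> expr) (e : expr) :
  (forall x, f x = g x) -> subst f e = subst g e.
Proof.
  revert f g; induction e; intros f g H; simpl; f_equal; auto;
    try (apply IHe || apply IHe2 || apply IHe3); intros [|x]; simpl; auto;
    rewrite H; auto.
Qed.

Lemma ren_ren (f g : nat -> nat) (e : expr) :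
  ren f (ren g e) = ren (fun x => f (g x)) e.
Proof.
  revert f g; induction e; intros f g; simpl; f_equal; auto;
    try rewrite IHe; try rewrite IHe2; try rewrite IHe3;
    apply ren_ext; intros [|x]; reflexivity.
Qed.

Lemma subst_ren (s : nat -> expr) (f : nat -> nat) (e : expr) :
  subst s (ren f e) = subst (fun x => s (f x)) e.
Proof.
  revert s f; induction e; intros s f; simpl; f_equal; auto;
    try rewrite IHe; try rewrite IHe2; try rewrite IHe3;
    apply subst_ext; intros [|x]; reflexivity.
Qed.

Lemma ren_subst (f : nat -> nat) (s : nat -> expr) (e : expr) :
  ren f (subst s e) = subst (fun x => ren f (s x)) e.
Proof.
  revert s f; induction e; intros s f; simpl; f_equal; auto;
    try rewrite IHe; try rewrite IHe2; try rewrite IHe3;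
    apply subst_ext; intros [|x]; simpl; auto;
    rewrite !ren_ren; apply ren_ext; reflexivity.
Qed.

Lemma subst_subst (s1 s2 : nat -> expr) (e : expr) :
  subst s2 (subst s1 e) = subst (fun x => subst s2 (s1 x)) e.
Proof.
  revert s1 s2; induction e; intros s1 s2; simpl; f_equal; auto;
    try rewrite IHe; try rewrite IHe2; try rewrite IHe3;
    apply subst_ext; intros [|x]; simpl; auto;
    rewrite subst_ren, ren_subst; apply subst_ext; reflexivity.
Qed.

Lemma subst_id (e : expr) : subst (@EVar Actor Lock) e = e.
Proof.
  induction e; simpl; f_equal; auto;
    try (rewrite <- IHe at 2); try (rewrite <- IHe2 at 2); try (rewrite <- IHe3 at 2);
    apply subst_ext; intros [|x]; reflexivity.
Qed.

Definition scons (v : expr) (sg : nat -> expr) (n : nat) : expr :=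
  match n with 0 => v | S k => sg k end.

Lemma subst1_up (v : expr) (sg : nat -> expr) (e : expr) :
  subst1 v (subst (up sg) e) = subst (scons v sg) e.
Proof.
  unfold subst1. rewrite subst_subst. apply subst_ext. intros [|x]; simpl; auto.
  rewrite subst_ren. apply subst_id.
Qed.

Lemma pol_le_trans (a b c : policy) : pol_le a b -> pol_le b c -> pol_le a c.
Proof.
  intros Hab Hbc S2 x Hc.
  destruct (Hbc _ _ Hc) as [S1 [Hb Hs1]]. destruct (Hab _ _ Hb) as [S0 [Ha Hs0]].
  exists S0; split; auto. intros s Hs; auto.
Qed.

Lemma pol_le_join_l (a b : policy) : pol_le a (pol_join a b).
Proof.
  intros S x [S1 [S2 [H1 [_ HS]]]].
  exists S1; split; auto. intros s Hs; apply HS; left; auto.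
Qed.

Lemma senv_ext_refl (th : senv) : senv_ext th th.
Proof. unfold senv_ext; auto. Qed.

Lemma senv_ext_trans (a b c : senv) : senv_ext a b -> senv_ext b c -> senv_ext a c.
Proof. unfold senv_ext; auto. Qed.

Definition senv_add (th : senv) (l : nat) (t : lty) : senv :=
  fun l' => if Nat.eqb l' l then Some t else th l'.

Lemma finite_dom_senv_add th l t : finite_dom th -> finite_dom (senv_add th l t).
Proof.
  intros [ls Hls]. exists (l :: ls). intros l0 Hl0. unfold senv_add in Hl0.
  destruct (Nat.eqb_spec l0 l); [left; auto|right; auto].
Qed.

Lemma senv_ext_add th l t : th l = None -> senv_ext th (senv_add th l t).
Proof. intros Hl l0 t0 H. unfold senv_add. destruct (Nat.eqb_spec l0 l); congruence. Qed.

Lemma value_no_step (v : expr) : is_value v ->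
  forall Sg S e' S' w Sg', ~ step v Sg S e' S' w Sg'.
Proof.
  induction 1; intros Sg S e' S' w Sg' Hs; inversion Hs; subst; eauto.
  all: match goal with
       | IH : forall _ _ _ _ _ _, ~ step _ _ _ _ _ _ _ |- _ => eapply IH; eassumption
       end.
Qed.

End Preliminaries.

Section LogicalRelation.
Context {Actor Lock : Type}.
Variable LockPolicy : Lock -> @policy Actor Lock.

Local Notation expr := (@expr Actor Lock).
Local Notation lty := (@lty Actor Lock).
Local Notation policy := (@policy Actor Lock).
Local Notation senv := (@senv Actor Lock).
Local Notation V := (Vrel LockPolicy).
Local Notation E := (Erel LockPolicy).

Lemma obs_ok_le (pc pc' : policy) w :
  pol_le pc' pc -> obs_ok LockPolicy pc w -> obs_ok LockPolicy pc' w.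
Proof. destruct w; simpl; auto; intros; eapply pol_le_trans; eauto. Qed.

Lemma rels_unfold m :
  rels LockPolicy m = build LockPolicy (fun m' (_ : m' < m) => rels LockPolicy m').
Proof.
  unfold rels at 1. rewrite Fix_eq; [reflexivity|].
  intros x f g H. f_equal.
  apply functional_extensionality_dep; intro y.
  apply functional_extensionality_dep; intro p. apply H.
Qed.

Lemma V_unfold t e th m :
  V t e th m = VL (fun m' (_ : m' < m) => rels LockPolicy m') t e th.
Proof. unfold Vrel. rewrite rels_unfold. reflexivity. Qed.

Lemma V_relabel A p q e th m : V (Lab A p) e th m <-> V (Lab A q) e th m.
Proof. rewrite !V_unfold. reflexivity. Qed.

Lemma V_spec t Sg v th m : V (ty_spec t Sg) v th m <-> V t v th m.
Proof. destruct t; apply V_relabel. Qed.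

Lemma V_unit p e th m : V (Lab TUnit p) e th m <-> e = EUnit.
Proof. rewrite V_unfold. reflexivity. Qed.

Lemma V_nat p e th m : V (Lab TNat p) e th m <-> exists n, e = ENat n.
Proof. rewrite V_unfold. reflexivity. Qed.

Lemma V_prod t1 t2 p e th m : V (Lab (TProd t1 t2) p) e th m <->
  exists v1 v2, e = EPair v1 v2 /\ V t1 v1 th m /\ V t2 v2 th m.
Proof. rewrite V_unfold. simpl. setoid_rewrite V_unfold. reflexivity. Qed.

Lemma V_sum t1 t2 p e th m : V (Lab (TSum t1 t2) p) e th m <->
  (exists v, e = EInl v /\ V t1 v th m) \/ (exists v, e = EInr v /\ V t2 v th m).
Proof. rewrite V_unfold. simpl. setoid_rewrite V_unfold. reflexivity. Qed.

Lemma V_ref t p e th m : V (Lab (TRef t) p) e th m <-> exists l, e = ELoc l /\ th l = Some t.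
Proof. rewrite V_unfold. reflexivity. Qed.

Lemma V_arr t1 Sg pc t2 p e th m : V (Lab (TArr t1 Sg pc t2) p) e th m <->
  exists b, e = ELam b /\ forall th' m', m' < m -> forall v,
    finite_dom th' -> senv_ext th th' -> V t1 v th' m' -> E pc t2 (subst1 v b) th' m'.
Proof. rewrite V_unfold. reflexivity. Qed.

Definition state_sat_at (m : nat) (S : @state Actor Lock) (th : senv) : Prop :=
  state_sat (fun t v th => V t v th m) S th.

Lemma E_unfold pc t e th m : E pc t e th m <->
  V t e th m \/
  (~ is_value e /\
   forall S th' m', m' < m -> forall e' S' w Sg Sg',
     finite_dom S -> finite_dom th' -> senv_ext th th' ->
     state_sat_at m' S th' -> step e Sg S e' S' w Sg' ->
     obs_ok LockPolicy pc w /\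
     exists th'', finite_dom th'' /\ senv_ext th' th'' /\
       state_sat_at m' S' th'' /\ E pc t e' th'' m').
Proof. unfold Erel at 1. rewrite rels_unfold, V_unfold. reflexivity. Qed.

Lemma E_of_V pc t v th m : V t v th m -> E pc t v th m.
Proof. intro; apply E_unfold; left; auto. Qed.

Ltac V_simpl :=
  try rewrite V_unit in *; try rewrite V_nat in *; try rewrite V_prod in *;
  try rewrite V_sum in *; try rewrite V_ref in *; try rewrite V_arr in *.

Ltac destruct_hyps :=
  repeat match goal with
  | H : exists _, _ |- _ => destruct H
  | H : _ /\ _ |- _ => destruct H
  | H : _ \/ _ |- _ => destruct H
  end; try discriminate;
  repeat match goal with H : ?a = ?b |- _ => injection H; clear H; intros; subst end.

Lemma V_is_value (v : expr) : forall t th m, V t v th m -> is_value v.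
Proof.
  induction v; intros [A p] th m H; destruct A; V_simpl; destruct_hyps;
    constructor; eauto.
Qed.

Lemma V_mono (v : expr) : forall t th m th2 m2,
  V t v th m -> senv_ext th th2 -> m2 <= m -> V t v th2 m2.
Proof.
  induction v; intros [A p] th m th2 m2 H Hext Hle; destruct A; V_simpl;
    try solve [destruct_hyps; eauto 10].
  destruct H as [b [Eb Hb]]. exists b; split; auto.
  intros th' m' Hlt w Hf Hext' Hw. apply Hb; auto; [lia|]. eapply senv_ext_trans; eauto.
Qed.

Lemma E_mono pc t e th m th2 m2 :
  E pc t e th m -> senv_ext th th2 -> m2 <= m -> E pc t e th2 m2.
Proof.
  intros H Hext Hle. rewrite E_unfold in *. destruct H as [H|[Hnv H]].
  - left. eapply V_mono; eauto.
  - right. split; auto. intros. eapply H; eauto; [lia|]. eapply senv_ext_trans; eauto.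
Qed.

Lemma E_weaken pc pc' t t' :
  (forall v th m, V t v th m -> V t' v th m) -> pol_le pc' pc ->
  forall m e th, E pc t e th m -> E pc' t' e th m.
Proof.
  intros HV Hpc m. induction m as [m IH] using lt_wf_ind. intros e th H.
  rewrite E_unfold in *. destruct H as [H|[Hnv H]]; [left; auto|right; split; auto].
  intros. edestruct H as [Hobs [th'' [Hf [Hext [Hsat HE]]]]]; eauto.
  split; [eapply obs_ok_le; eauto|]. exists th''; repeat split; auto.
Qed.

Lemma E_lower_pc pc pc' t e th m : pol_le pc' pc -> E pc t e th m -> E pc' t e th m.
Proof. intros; eapply E_weaken; eauto. Qed.

Scheme subL_mut := Induction for subL Sort Prop
with subR_mut := Induction for subR Sort Prop.
Combined Scheme sub_mut from subL_mut, subR_mut.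

Lemma V_sub_mut :
  (forall t t', subL t t' -> forall v th m, V t v th m -> V t' v th m) /\
  (forall A B, subR A B ->
     forall p p' v th m, V (Lab A p) v th m -> V (Lab B p') v th m).
Proof.
  apply (sub_mut _ _ (fun t t' _ => forall v th m, V t v th m -> V t' v th m)
           (fun A B _ => forall p p' v th m, V (Lab A p) v th m -> V (Lab B p') v th m)).
  all: try solve [intros; V_simpl; destruct_hyps; eauto 10].
  intros t0 t1 t2 t3 Sg Sg' pc pc' _ Hdom _ Hcod Hpc _ q q' v th m Hv.
  apply V_arr in Hv as [b [-> Hb]]. apply V_arr. exists b; split; auto.
  intros th' m' Hlt w Hf Hext Hw. eapply E_weaken; [exact Hcod|exact Hpc|apply Hb; auto].
Qed.

Lemma V_sub t t' : subL t t' -> forall v th m, V t v th m -> V t' v th m.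
Proof. apply V_sub_mut. Qed.

(* The hole may run under a different open-lock set, as in [opened σ in _]. *)
Definition ectx (K : expr -> expr) : Prop :=
  forall e, ~ is_value e -> ~ is_value (K e) /\
    forall Sg S e'' S' w Sg', step (K e) Sg S e'' S' w Sg' ->
      exists Sg0 e', step e Sg0 S e' S' w Sg' /\ e'' = K e'.

Lemma E_bind K pc t1 t2 : ectx K -> forall m e th, finite_dom th -> E pc t1 e th m ->
  (forall th0 m0 v, finite_dom th0 -> senv_ext th th0 -> m0 <= m -> V t1 v th0 m0 ->
     E pc t2 (K v) th0 m0) ->
  E pc t2 (K e) th m.
Proof.
  intros HK m. induction m as [m IH] using lt_wf_ind. intros e th Hf H Hcont.
  rewrite E_unfold in H. destruct H as [H|[Hnv H]].
  - apply Hcont; auto using senv_ext_refl.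
  - destruct (HK e Hnv) as [HnvK HstepK]. apply E_unfold. right. split; auto.
    intros S th' m' Hlt e'' S' w Sg Sg' HfS Hf' Hext Hsat Hst.
    destruct (HstepK _ _ _ _ _ _ Hst) as [Sg0 [e' [Hst' ->]]].
    destruct (H S th' m' Hlt e' S' w Sg0 Sg' HfS Hf' Hext Hsat Hst')
      as [Hobs [th'' [Hf'' [Hext'' [Hsat'' HE]]]]].
    split; auto. exists th''; repeat split; auto.
    apply IH; auto. intros th0 m0 v Hf0 Hext0 Hle Hv. apply Hcont; auto; [|lia].
    eauto using senv_ext_trans.
Qed.

Ltac not_value := let H := fresh in intro H; inversion H.

Ltac solve_ectx :=
  intros e Hnv; split; [not_value; auto|];
  intros Sg S e'' S' w Sg' Hst; inversion Hst; subst;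
  solve [ do 2 eexists; split; [eassumption|reflexivity]
        | exfalso; apply Hnv; assumption
        | exfalso; apply Hnv; constructor; auto
        | exfalso; eapply value_no_step; [|eassumption]; first [assumption | constructor] ].

Lemma ectx_new t : ectx (fun e => ENew e t). Proof. solve_ectx. Qed.
Lemma ectx_deref : ectx EDeref. Proof. solve_ectx. Qed.
Lemma ectx_assignL e2 : ectx (fun e => EAssign e e2). Proof. solve_ectx. Qed.
Lemma ectx_assignR l : ectx (fun e => EAssign (ELoc l) e). Proof. solve_ectx. Qed.
Lemma ectx_appL e2 : ectx (fun e => EApp e e2). Proof. solve_ectx. Qed.
Lemma ectx_appR b : ectx (fun e => EApp (ELam b) e). Proof. solve_ectx. Qed.
Lemma ectx_pairL e2 : ectx (fun e => EPair e e2). Proof. solve_ectx. Qed.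
Lemma ectx_pairR v : is_value v -> ectx (fun e => EPair v e). Proof. intro. solve_ectx. Qed.
Lemma ectx_fst : ectx EFst. Proof. solve_ectx. Qed.
Lemma ectx_snd : ectx ESnd. Proof. solve_ectx. Qed.
Lemma ectx_inl : ectx EInl. Proof. solve_ectx. Qed.
Lemma ectx_inr : ectx EInr. Proof. solve_ectx. Qed.
Lemma ectx_case e1 e2 : ectx (fun e => ECase e e1 e2). Proof. solve_ectx. Qed.
Lemma ectx_opened s : ectx (EOpened s). Proof. solve_ectx. Qed.
Lemma ectx_closed s : ectx (EClosed s). Proof. solve_ectx. Qed.

Ltac value_stuck :=
  solve [ exfalso; eapply value_no_step; [|eassumption];
          repeat constructor; eauto using V_is_value ].

Lemma E_step {pc t e th m S th' m' e' S' w Sg Sg'} :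
  E pc t e th m -> step e Sg S e' S' w Sg' -> m' < m ->
  finite_dom S -> finite_dom th' -> senv_ext th th' -> state_sat_at m' S th' ->
  obs_ok LockPolicy pc w /\
  exists th'', finite_dom th'' /\ senv_ext th' th'' /\
    state_sat_at m' S' th'' /\ E pc t e' th'' m'.
Proof.
  intros H Hst; intros. apply E_unfold in H as [Hv|[_ H]]; [value_stuck|eauto].
Qed.

Lemma E_stateless_step pc t r th m : ~ is_value r ->
  (forall Sg S e' S' w Sg' th' m', m' < m -> finite_dom th' -> senv_ext th th' ->
     state_sat_at m' S th' -> step r Sg S e' S' w Sg' ->
     S' = S /\ obs_ok LockPolicy pc w /\ E pc t e' th' m') ->
  E pc t r th m.
Proof.
  intros Hnv H. apply E_unfold; right; split; auto.
  intros S th' m' Hlt e' S' w Sg Sg' _ Hf' Hext Hsat Hst.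
  destruct (H _ _ _ _ _ _ _ _ Hlt Hf' Hext Hsat Hst) as [-> [Hobs HE]].
  split; auto. exists th'; repeat split; auto using senv_ext_refl.
Qed.

Lemma E_opened pc t s e th m : finite_dom th -> pol_le pc (LockPolicy s) ->
  E pc t e th m -> E pc t (EOpened s e) th m.
Proof.
  intros Hf Hpc H. eapply E_bind; [apply ectx_opened|eauto|eauto|].
  intros th0 m0 v Hf0 Hext0 Hle0 Hv. apply E_stateless_step; [not_value|].
  intros Sg S e' S' w Sg' th' m' Hlt Hf' Hext _ Hst. inversion Hst; subst; try value_stuck.
  split; [reflexivity|split; [exact Hpc|]]. apply E_of_V; eapply V_mono; eauto; lia.
Qed.

Lemma E_closed pc t s e th m : finite_dom th -> pol_le pc (LockPolicy s) ->
  E pc t e th m -> E pc t (EClosed s e) th m.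
Proof.
  intros Hf Hpc H. eapply E_bind; [apply ectx_closed|eauto|eauto|].
  intros th0 m0 v Hf0 Hext0 Hle0 Hv. apply E_stateless_step; [not_value|].
  intros Sg S e' S' w Sg' th' m' Hlt Hf' Hext _ Hst. inversion Hst; subst; try value_stuck.
  split; [reflexivity|split; [exact Hpc|]]. apply E_of_V; eapply V_mono; eauto; lia.
Qed.

Lemma E_when pc t s m : forall e1 e2 th,
  E pc t e1 th m -> E pc t e2 th m -> E pc t (EWhen s e1 e2) th m.
Proof.
  induction m as [m IH] using lt_wf_ind. intros e1 e2 th H1 H2.
  apply E_unfold; right; split; [not_value|].
  intros S th' m' Hlt e'' S' w Sg Sg' HfS Hf' Hext Hsat Hst.
  inversion Hst; subst.
  - destruct (E_step H1 ltac:(eassumption) Hlt HfS Hf' Hext Hsat)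
      as [Hobs [th'' [Hf'' [Hext'' [Hsat'' HE]]]]].
    split; auto. exists th''; repeat split; auto.
    apply IH; auto. eapply E_mono; eauto using senv_ext_trans; lia.
  - destruct (E_step H2 ltac:(eassumption) Hlt HfS Hf' Hext Hsat)
      as [Hobs [th'' [Hf'' [Hext'' [Hsat'' HE]]]]].
    split; auto. exists th''; repeat split; auto.
    apply IH; auto. eapply E_mono; eauto using senv_ext_trans; lia.
  - split; [exact I|]. exists th'; repeat split; auto using senv_ext_refl.
    eapply E_mono; eauto; lia.
  - split; [exact I|]. exists th'; repeat split; auto using senv_ext_refl.
    eapply E_mono; eauto; lia.
Qed.

Lemma state_sat_fresh m S th l : state_sat_at m S th -> S l = None -> th l = None.
Proof.
  intros Hsat HS. destruct (th l) as [t|] eqn:Hl; auto.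
  destruct (Hsat l t Hl) as [v [Hv _]]. congruence.
Qed.

Lemma state_sat_alloc m S th l v t :
  state_sat_at m S th -> S l = None -> V t v th m ->
  state_sat_at m (upd S l (v, t)) (senv_add th l t).
Proof.
  intros Hsat HS Hv l0 t0 Ht0.
  assert (Hext : senv_ext th (senv_add th l t))
    by (apply senv_ext_add; eapply state_sat_fresh; eauto).
  unfold upd, senv_add in *. destruct (Nat.eqb_spec l0 l).
  - injection Ht0 as <-. exists v; split; auto. eapply V_mono; eauto.
  - destruct (Hsat l0 t0 Ht0) as [v0 [Hv0 HV0]]. exists v0; split; auto.
    eapply V_mono; eauto.
Qed.

Lemma state_sat_update m S th l v t :
  state_sat_at m S th -> th l = Some t -> V t v th m ->
  state_sat_at m (upd S l (v, t)) th.
Proof.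
  intros Hsat Hl Hv l0 t0 Ht0. unfold upd. destruct (Nat.eqb_spec l0 l).
  - subst. rewrite Hl in Ht0. injection Ht0 as <-. eauto.
  - apply Hsat; auto.
Qed.

Definition Vsubst (G : @ctx Actor Lock) (sg : nat -> expr) (th : senv) (m : nat) : Prop :=
  forall x t, G x = Some t -> V t (sg x) th m.

Lemma Vsubst_mono G sg th m th2 m2 :
  Vsubst G sg th m -> senv_ext th th2 -> m2 <= m -> Vsubst G sg th2 m2.
Proof. intros H Hext Hle x t Hx. eapply V_mono; eauto. Qed.

Lemma Vsubst_cons G sg th m t v :
  Vsubst G sg th m -> V t v th m -> Vsubst (ctx_cons t G) (scons v sg) th m.
Proof. intros H Hv [|x] t' Hx; simpl in *; [injection Hx as <-|]; auto. Qed.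

Definition sem_typing (G : @ctx Actor Lock) (th : senv) (pc : policy) (e : expr) (t : lty)
  : Prop :=
  forall th' m sg, finite_dom th' -> senv_ext th th' -> Vsubst G sg th' m ->
    E pc t (subst sg e) th' m.

Lemma sem_typing_later G th pc e t th' m sg th0 m0 :
  sem_typing G th pc e t -> senv_ext th th' -> Vsubst G sg th' m ->
  finite_dom th0 -> senv_ext th' th0 -> m0 <= m -> E pc t (subst sg e) th0 m0.
Proof.
  intros He Hext Hsg Hf0 Hext0 Hle. apply He; auto.
  - eapply senv_ext_trans; eauto.
  - eapply Vsubst_mono; eauto.
Qed.

Section Compatibility.
Variables (G : @ctx Actor Lock) (th : senv).

Lemma sem_sub pc pc' e t t' : pol_le pc pc' ->
  (forall v th m, V t' v th m -> V t v th m) ->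
  sem_typing G th pc' e t' -> sem_typing G th pc e t.
Proof. intros Hpc Ht He th' m sg Hf Hext Hsg. eapply E_weaken; eauto. Qed.

Lemma sem_lam pc pc' Sg e t1 t2 : sem_typing (ctx_cons t1 G) th pc' e t2 ->
  sem_typing G th pc (ELam e) (Lab (TArr t1 Sg pc' t2) pol_bot).
Proof.
  intros He th' m sg Hf Hext Hsg; simpl. apply E_of_V, V_arr. eexists; split; [reflexivity|].
  intros th2 m2 Hlt v Hf2 Hext2 Hv. rewrite subst1_up.
  apply He; auto.
  - eapply senv_ext_trans; eauto.
  - apply Vsubst_cons; auto. eapply Vsubst_mono; eauto; lia.
Qed.

Lemma sem_open pc s e t : pol_le pc (LockPolicy s) -> sem_typing G th pc e t ->
  sem_typing G th pc (EOpen s e) t.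
Proof.
  intros Hpc He th' m sg Hf Hext Hsg. apply E_stateless_step; [not_value|].
  intros Sg S e' S' w Sg' th2 m2 Hlt Hf2 Hext2 _ Hst. inversion Hst; subst.
  split; [reflexivity|split; [exact Hpc|]].
  apply E_opened; auto. eapply sem_typing_later; eauto; lia.
Qed.

Lemma sem_opened pc s e t : pol_le pc (LockPolicy s) -> sem_typing G th pc e t ->
  sem_typing G th pc (EOpened s e) t.
Proof. intros Hpc He th' m sg Hf Hext Hsg. apply E_opened; auto. Qed.

Lemma sem_close pc s e t : pol_le pc (LockPolicy s) -> sem_typing G th pc e t ->
  sem_typing G th pc (EClose s e) t.
Proof.
  intros Hpc He th' m sg Hf Hext Hsg. apply E_stateless_step; [not_value|].
  intros Sg S e' S' w Sg' th2 m2 Hlt Hf2 Hext2 _ Hst. inversion Hst; subst.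
  split; [reflexivity|split; [exact Hpc|]].
  apply E_closed; auto. eapply sem_typing_later; eauto; lia.
Qed.

Lemma sem_closed pc s e t : pol_le pc (LockPolicy s) -> sem_typing G th pc e t ->
  sem_typing G th pc (EClosed s e) t.
Proof. intros Hpc He th' m sg Hf Hext Hsg. apply E_closed; auto. Qed.

Lemma sem_when pc s e1 e2 t : sem_typing G th pc e1 t -> sem_typing G th pc e2 t ->
  sem_typing G th pc (EWhen s e1 e2) t.
Proof. intros He1 He2 th' m sg Hf Hext Hsg. apply E_when; auto. Qed.

Lemma sem_pair pc e1 e2 t1 t2 : sem_typing G th pc e1 t1 -> sem_typing G th pc e2 t2 ->
  sem_typing G th pc (EPair e1 e2) (Lab (TProd t1 t2) pol_bot).
Proof.
  intros He1 He2 th' m sg Hf Hext Hsg; simpl.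
  eapply E_bind with (K := fun e => EPair e (subst sg e2)); [apply ectx_pairL|eauto|eauto|].
  intros th0 m0 v1 Hf0 Hext0 Hle0 Hv1.
  eapply E_bind with (K := fun e => EPair v1 e);
    [apply ectx_pairR; eapply V_is_value; eauto|eauto|eapply sem_typing_later; eauto|].
  intros th1 m1 v2 Hf1 Hext1 Hle1 Hv2. apply E_of_V, V_prod.
  exists v1, v2; repeat split; auto. eapply V_mono; eauto.
Qed.

Lemma sem_fst pc p e t1 t2 : sem_typing G th pc e (Lab (TProd t1 t2) p) ->
  sem_typing G th pc (EFst e) t1.
Proof.
  intros He th' m sg Hf Hext Hsg; simpl.
  eapply E_bind with (K := EFst); [apply ectx_fst|eauto|eauto|].
  intros th0 m0 v Hf0 Hext0 Hle0 Hv. apply V_prod in Hv as [v1 [v2 [-> [Hv1 Hv2]]]].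
  apply E_stateless_step; [not_value|].
  intros Sg S e' S' w Sg' th2 m2 Hlt Hf2 Hext2 _ Hst. inversion Hst; subst; try value_stuck.
  split; [reflexivity|split; [exact I|]]. apply E_of_V; eapply V_mono; eauto; lia.
Qed.

Lemma sem_snd pc p e t1 t2 : sem_typing G th pc e (Lab (TProd t1 t2) p) ->
  sem_typing G th pc (ESnd e) t2.
Proof.
  intros He th' m sg Hf Hext Hsg; simpl.
  eapply E_bind with (K := ESnd); [apply ectx_snd|eauto|eauto|].
  intros th0 m0 v Hf0 Hext0 Hle0 Hv. apply V_prod in Hv as [v1 [v2 [-> [Hv1 Hv2]]]].
  apply E_stateless_step; [not_value|].
  intros Sg S e' S' w Sg' th2 m2 Hlt Hf2 Hext2 _ Hst. inversion Hst; subst; try value_stuck.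
  split; [reflexivity|split; [exact I|]]. apply E_of_V; eapply V_mono; eauto; lia.
Qed.

Lemma sem_inl pc e t1 t2 : sem_typing G th pc e t1 ->
  sem_typing G th pc (EInl e) (Lab (TSum t1 t2) pol_bot).
Proof.
  intros He th' m sg Hf Hext Hsg; simpl.
  eapply E_bind with (K := EInl); [apply ectx_inl|eauto|eauto|].
  intros th0 m0 v _ _ _ Hv. apply E_of_V, V_sum; left; eauto.
Qed.

Lemma sem_inr pc e t1 t2 : sem_typing G th pc e t2 ->
  sem_typing G th pc (EInr e) (Lab (TSum t1 t2) pol_bot).
Proof.
  intros He th' m sg Hf Hext Hsg; simpl.
  eapply E_bind with (K := EInr); [apply ectx_inr|eauto|eauto|].
  intros th0 m0 v _ _ _ Hv. apply E_of_V, V_sum; right; eauto.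
Qed.

Lemma sem_case pc p e e1 e2 t1 t2 t :
  sem_typing G th pc e (Lab (TSum t1 t2) p) ->
  sem_typing (ctx_cons t1 G) th pc e1 t -> sem_typing (ctx_cons t2 G) th pc e2 t ->
  sem_typing G th pc (ECase e e1 e2) t.
Proof.
  intros He He1 He2 th' m sg Hf Hext Hsg; simpl.
  eapply E_bind with (K := fun e => ECase e (subst (up sg) e1) (subst (up sg) e2));
    [apply ectx_case|eauto|eauto|].
  intros th0 m0 v Hf0 Hext0 Hle0 Hv. apply E_stateless_step; [not_value|].
  intros Sg S e' S' w Sg' th2 m2 Hlt Hf2 Hext2 _ Hst.
  assert (Hsg2 : Vsubst G sg th2 m2)
    by (eapply Vsubst_mono; eauto using senv_ext_trans; lia).
  apply V_sum in Hv as [[v1 [-> Hv1]]|[v1 [-> Hv1]]];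
    inversion Hst; subst; try value_stuck;
    (split; [reflexivity|split; [exact I|]]); rewrite subst1_up.
  - apply He1; eauto using senv_ext_trans.
    apply Vsubst_cons; auto. eapply V_mono; eauto; lia.
  - apply He2; eauto using senv_ext_trans.
    apply Vsubst_cons; auto. eapply V_mono; eauto; lia.
Qed.

Lemma sem_app pc pc' p Sg e1 e2 t1 t1' t2 :
  sem_typing G th pc e1 (Lab (TArr t1 Sg pc' t2) p) -> sem_typing G th pc e2 t1' ->
  pol_le pc pc' -> subL t1' t1 -> sem_typing G th pc (EApp e1 e2) t2.
Proof.
  intros He1 He2 Hpc Ht1 th' m sg Hf Hext Hsg; simpl.
  eapply E_bind with (K := fun e => EApp e (subst sg e2)); [apply ectx_appL|eauto|eauto|].
  intros th0 m0 f Hf0 Hext0 Hle0 Hfun. apply V_arr in Hfun as [b [-> Hb]].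
  eapply E_bind with (K := fun e => EApp (ELam b) e);
    [apply ectx_appR|eauto|eapply sem_typing_later; eauto|].
  intros th1 m1 v Hf1 Hext1 Hle1 Hv. apply E_stateless_step; [not_value|].
  intros Sg1 S e' S' w Sg2 th2 m2 Hlt Hf2 Hext2 _ Hst. inversion Hst; subst; try value_stuck.
  split; [reflexivity|split; [exact I|]].
  eapply E_lower_pc; [exact Hpc|]. apply Hb; [lia|auto|eauto using senv_ext_trans|].
  eapply V_sub; eauto. eapply V_mono; eauto; lia.
Qed.

Lemma sem_deref pc p e t t' : sem_typing G th pc e (Lab (TRef t) p) -> subL t t' ->
  sem_typing G th pc (EDeref e) t'.
Proof.
  intros He Ht th' m sg Hf Hext Hsg; simpl.
  eapply E_bind with (K := EDeref); [apply ectx_deref|eauto|eauto|].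
  intros th0 m0 r Hf0 Hext0 Hle0 Hr. apply V_ref in Hr as [l [-> Hl]].
  apply E_stateless_step; [not_value|].
  intros Sg S e' S' w Sg' th2 m2 Hlt Hf2 Hext2 Hsat Hst. inversion Hst; subst; try value_stuck.
  split; [reflexivity|split; [exact I|]].
  destruct (Hsat l t (Hext2 _ _ Hl)) as [v [HS Hv]].
  match goal with H : S' l = Some _ |- _ => rewrite HS in H; injection H; intros; subst end.
  apply E_of_V. eapply V_sub; eauto.
Qed.

Lemma sem_new pc Sg e t t' : pol_le pc (lab t) -> subL (ty_spec t' Sg) t ->
  sem_typing G th pc e t' -> sem_typing G th pc (ENew e t) (Lab (TRef t) pol_bot).
Proof.
  intros Hpc Ht He th' m sg Hf Hext Hsg; simpl.
  eapply E_bind with (K := fun e => ENew e t); [apply ectx_new|eauto|eauto|].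
  intros th0 m0 v Hf0 Hext0 Hle0 Hv. apply E_unfold; right; split; [not_value|].
  intros S th2 m2 Hlt e' S' w Sg1 Sg2 _ Hf2 Hext2 Hsat Hst. inversion Hst; subst; try value_stuck.
  split; [exact Hpc|].
  exists (senv_add th2 l t); split; [|split; [|split]].
  - apply finite_dom_senv_add; auto.
  - apply senv_ext_add. eapply state_sat_fresh; eauto.
  - apply state_sat_alloc; auto.
    eapply V_sub; [eauto|]. apply V_spec. eapply V_mono; eauto; lia.
  - apply E_of_V, V_ref. exists l; split; auto. unfold senv_add. rewrite Nat.eqb_refl; auto.
Qed.

Lemma sem_assign pc p Sg e e' t t' :
  sem_typing G th pc e (Lab (TRef t') p) -> sem_typing G th pc e' t ->
  subL (ty_spec t Sg) t' -> pol_le pc (lab t') ->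
  sem_typing G th pc (EAssign e e') (Lab TUnit pol_bot).
Proof.
  intros He He' Ht Hpc th' m sg Hf Hext Hsg; simpl.
  eapply E_bind with (K := fun e => EAssign e (subst sg e')); [apply ectx_assignL|eauto|eauto|].
  intros th0 m0 r Hf0 Hext0 Hle0 Hr. apply V_ref in Hr as [l [-> Hl]].
  eapply E_bind with (K := fun e => EAssign (ELoc l) e);
    [apply ectx_assignR|eauto|eapply sem_typing_later; eauto|].
  intros th1 m1 v Hf1 Hext1 Hle1 Hv. apply E_unfold; right; split; [not_value|].
  intros S th2 m2 Hlt e'' S' w Sg1 Sg2 _ Hf2 Hext2 Hsat Hst. inversion Hst; subst; try value_stuck.
  assert (Hl2 : th2 l = Some t') by auto.
  destruct (Hsat l t' Hl2) as [v0 [HS _]].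
  match goal with H : S l = Some _ |- _ => rewrite HS in H; injection H; intros; subst end.
  split; [exact Hpc|]. exists th2; split; [|split; [|split]]; auto using senv_ext_refl.
  - apply state_sat_update; auto.
    eapply V_sub; [eauto|]. apply V_spec. eapply V_mono; eauto; lia.
  - apply E_of_V, V_unit; auto.
Qed.

End Compatibility.

Lemma fundamental G Sg th pc e t :
  typing LockPolicy G Sg th pc e t -> sem_typing G th pc e t.
Proof.
  induction 1.
  - intros th' m sg _ _ Hsg. apply E_of_V, Hsg; auto.
  - intros th' m sg _ _ _; simpl. apply E_of_V, V_unit; reflexivity.
  - intros th' m sg _ _ _; simpl. apply E_of_V, V_nat; eauto.
  - intros th' m sg _ Hext _; simpl. apply E_of_V, V_ref; eauto.
  - apply sem_lam; auto.
  - apply sem_open; auto.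
  - apply sem_opened; auto.
  - apply sem_close; auto.
  - apply sem_closed; auto.
  - apply sem_pair; auto.
  - eapply sem_fst; eauto.
  - eapply sem_snd; eauto.
  - apply sem_inl; auto.
  - apply sem_inr; auto.
  - eapply sem_case; [eauto|..];
      (eapply sem_sub; [..|eassumption]; [apply pol_le_join_l|auto]).
  - eapply sem_sub; [..|eassumption]; [assumption|apply V_sub; assumption].
  - eapply sem_app; eauto. eapply pol_le_trans; [apply pol_le_join_l|eassumption].
  - eapply sem_deref; eauto.
  - eapply sem_new; eauto.
  - eapply sem_assign; eauto. eapply pol_le_trans; [apply pol_le_join_l|eassumption].
  - apply sem_when; (eapply sem_sub; [..|eassumption]; [apply pol_le_join_l|auto]).
Qed.

End LogicalRelation.

Theorem mainTheorem3 (Actor Lock : Type) (LockPolicy : Lock -> @policy Actor Lock)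
  (G : @ctx Actor Lock) (Sg : @lockset Lock) (th th' : @senv Actor Lock)
  (pc : @policy Actor Lock) (e : @expr Actor Lock) (t : @lty Actor Lock)
  (m : nat) (d : @vsubst Actor Lock) :
  typing LockPolicy G Sg th pc e t ->
  finite_dom th' -> senv_ext th th' ->
  vsubst_ok d -> Vctx LockPolicy G d th' m ->
  Erel LockPolicy pc t (apply_vsubst d e) th' m.
Proof.
  intros Hty Hfin Hext _ Hd.
  eapply fundamental; [exact Hty|exact Hfin|exact Hext|].
  intros x tx Hx. destruct (Hd x tx Hx) as [v [-> Hv]]. exact Hv.
Qed.
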